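(* Let $k\ge 2$, let $d$ be a positive integer, let $1\le r<k$ and let $r<t\le k$. Let $\hat W=(W_1,\ldots,W_d)$ with each $W_i\in\{+,-\}^r$, and let $\hat p=(p_1,\ldots,p_d)$ be a sequence of pairwise disjoint $r$-tuples $p_j=(a_{j,1},\ldots,a_{j,r})$ with $a_{j,i}\in A_i$. For all sufficiently large $n$ (as a function of $k$ and $d$), for $T\sim\mathcal{R}(n,k)$, $$\Pr\left[|I_{\hat W}(\hat p,t)|\ge n(1-1/2^r)^d+n^{2/3}\right]\le \frac{1}{n^{kd+1}}.$$
   Context: $\mathcal{R}(n,k)$ is the probability space of $k$-partite tournaments with vertex classes $A_1,\ldots,A_k$ of size $n$ each, every edge between distinct classes oriented independently and uniformly at random. For an $r$-tuple $p=(a_1,\ldots,a_r)$ with $a_i\in A_i$, a vertex $v\in A_t$ ($t>r$) and $W\in\{+,-\}^r$, $v$ is $W$-consistent with $p$ if for each $i$, $(v,a_i)\in E(T)$ iff $W(i)=+$; otherwise $v$ is $W$-inconsistent with $p$. For $\hat p,\hat W$ as in the statement, $v\in A_t$ is $\hat W$-inconsistent with $\hat p$ if $v$ is $W_i$-inconsistent with $p_i$ for every $i=1,\ldots,d$, and $I_{\hat W}(\hat p,t)$ is the set of vertices of $A_t$ that are $\hat W$-inconsistent with $\hat p$. *)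

From HB Require Import structures.
From mathcomp Require Import all_boot all_order all_algebra.
From mathcomp Require Import reals exp.
Set Implicit Arguments. Unset Strict Implicit. Unset Printing Implicit Defensive.
Import Order.TTheory GRing.Theory Num.Theory.

(* Vertices of the k-partite tournament: class i : 'I_k (0-indexed, class i
   corresponds to A_{i+1} in the paper), position within the class : 'I_n. *)
Definition vtx (k n : nat) := ('I_k * 'I_n)%type.

(* Unordered pairs of vertices in distinct classes, represented by the
   ordered pair (u,v) with class(u) < class(v). *)
Definition edge_dom (k n : nat) :=
  {e : vtx k n * vtx k n | (nat_of_ord e.1.1 < nat_of_ord e.2.1)%N}.

(* A k-partite tournament: for each such pair, T e = true means u -> v,
   false means v -> u. The uniform distribution on this finite type is
   exactly R(n,k). *)
Definition tourn (k n : nat) := {ffun edge_dom k n -> bool}.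

Definition arc (k n : nat) (T : tourn k n) (u v : vtx k n) : bool :=
  match @insub _ (fun e : vtx k n * vtx k n => (nat_of_ord e.1.1 < nat_of_ord e.2.1)%N)
               (edge_dom k n) (u, v) with
  | Some e => T e
  | None =>
    match @insub _ (fun e : vtx k n * vtx k n => (nat_of_ord e.1.1 < nat_of_ord e.2.1)%N)
                 (edge_dom k n) (v, u) with
    | Some e => ~~ T e
    | None => false
    end
  end.

(* v is W-consistent with the r-tuple a (W i = true encodes '+'):
   for each i, (v, a_i) in E(T) iff W(i) = +. *)
Definition consistent (k n r : nat) (T : tourn k n) (W : 'I_r -> bool)
  (a : 'I_r -> vtx k n) (v : vtx k n) : bool :=
  [forall i : 'I_r, arc T v (a i) == W i].

Definition hat_inconsistent (k n r d : nat) (T : tourn k n)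
  (W : 'I_d -> 'I_r -> bool) (p : 'I_d -> 'I_r -> vtx k n) (v : vtx k n) : bool :=
  [forall j : 'I_d, ~~ consistent T (W j) (p j) v].

Definition I_set (k n r d : nat) (T : tourn k n)
  (W : 'I_d -> 'I_r -> bool) (p : 'I_d -> 'I_r -> vtx k n) (t : 'I_k)
  : {set vtx k n} :=
  [set v : vtx k n | (v.1 == t) && hat_inconsistent T W p v].

Definition Pr (R : realType) (k n : nat) (E : pred (tourn k n)) : R :=
  (#|[set T : tourn k n | E T]|%:R / #|{: tourn k n}|%:R)%R.

From Pilot Require Import Defs.
From mathcomp Require Import all_boot all_order all_algebra.
From mathcomp Require Import reals exp sequences.
From mathcomp Require Import ring lra.
Set Implicit Arguments.
Unset Strict Implicit.
Unset Printing Implicit Defensive.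

Import Order.TTheory GRing.Theory Num.Theory.
Local Open Scope ring_scope.

(* For x in class t, the tuples of p are joined to (t, x) by d * r edges, and
   these edges are pairwise distinct over all x because the tuples are
   disjoint.  Hence, for a uniform tournament, the edge patterns seen by the n
   vertices of class t are independent and uniform, each vertex lies in I with
   probability q = (1 - 2^-r)^d, and |I| is Binomial(n, q).  The Chernoff bound
   Pr[|I| >= nq + s] <= exp(-(nq + s) delta/(1 + delta)) (1 + delta q)^n with
   s = n^(2/3) and delta = s/(2n) is at most exp(-n^(1/3)/6), which is
   eventually below n^-(kd+1). *)

Section EqualFibers.
Variables (A Y : finType) (G : A -> Y) (c : nat).
Hypothesis fiberG : forall y, #|[set a | G a == y]| = c.

Lemma sum_comp_equal_fibers (V : nmodType) (F : Y -> V) :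
  \sum_(a : A) F (G a) = (\sum_(y : Y) F y) *+ c.
Proof.
rewrite (partition_big G predT) //= -sumrMnl; apply: eq_bigr => y _.
rewrite (eq_bigr (fun _ => F y)) => [|a /eqP-> //].
by rewrite sumr_const -(fiberG y) cardsE.
Qed.

Lemma card_equal_fibers : #|A| = (#|Y| * c)%N.
Proof.
by rewrite -sum1_card (@sum_comp_equal_fibers nat (fun=> 1%N)) sum1_card -mulr_natr natn.
Qed.

Lemma mean_comp_equal_fibers (R : numFieldType) (F : Y -> R) : (0 < c)%N ->
  (\sum_(a : A) F (G a)) / #|A|%:R = (\sum_(y : Y) F y) / #|Y|%:R.
Proof.
move=> c_gt0; rewrite sum_comp_equal_fibers card_equal_fibers natrM.
have c_neq0 : c%:R != 0 :> R by rewrite pnatr_eq0 -lt0n.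
by rewrite -[_ *+ c]mulr_natr invfM mulrACA divff // mulr1.
Qed.

End EqualFibers.

Section Slices.
Variables (E X J I : finType) (e : X -> J -> I -> E).
Hypothesis e_inj : forall x j i x' j' i', e x j i = e x' j' i' -> (x, j, i) = (x', j', i').

Definition slices (T : {ffun E -> bool}) : {ffun X -> {ffun J -> {ffun I -> bool}}} :=
  [ffun x => [ffun j => [ffun i => T (e x j i)]]].

Lemma slices_surj (y : {ffun X -> {ffun J -> {ffun I -> bool}}}) : exists T, slices T = y.
Proof.
exists [ffun u => if [pick z | e z.1.1 z.1.2 z.2 == u] is Some z then y z.1.1 z.1.2 z.2 else false].
apply/ffunP => x; apply/ffunP => j; apply/ffunP => i; rewrite !ffunE.
case: pickP => [[[x' j'] i'] /eqP/e_inj [-> -> ->] // | no_pre].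
by have := no_pre (x, j, i); rewrite eqxx.
Qed.

Lemma slices_addb (T L : {ffun E -> bool}) :
  slices [ffun u => T u (+) L u]
  = [ffun x => [ffun j => [ffun i => slices T x j i (+) slices L x j i]]].
Proof. by apply/ffunP => x; apply/ffunP => j; apply/ffunP => i; rewrite !ffunE. Qed.

Lemma eq_ffun3E (y y' : {ffun X -> {ffun J -> {ffun I -> bool}}}) :
  (y == y') = [forall x, forall j, forall i, y x j i == y' x j i].
Proof.
apply/eqP/forallP => [-> x | eq_y]; first by apply/forallP => j; apply/forallP.
apply/ffunP => x; apply/ffunP => j; apply/ffunP => i.
by have /forallP/(_ j)/forallP/(_ i)/eqP := eq_y x.
Qed.

Lemma card_slices_fiber (y : {ffun X -> {ffun J -> {ffun I -> bool}}}) :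
  #|[set T | slices T == y]| = #|[set T | slices T == slices [ffun=> false]]|.
Proof.
(* Adding an extension L of y maps the fiber over [ffun=> false] onto the fiber over y. *)
have [L sliceL] := slices_surj y.
pose shift (T : {ffun E -> bool}) := [ffun u => T u (+) L u].
have shift_inj : injective shift.
  by move=> T1 T2 /ffunP eqT; apply/ffunP => u; have := eqT u; rewrite !ffunE => /addIb.
rewrite -(card_preimset _ shift_inj); apply: eq_card => T; rewrite !inE slices_addb sliceL.
rewrite !eq_ffun3E; do 3 (apply: eq_forallb => ?); rewrite !ffunE.
by case: (T _); case: (y _ _ _).
Qed.

Lemma mean_comp_slices (R : numFieldType) (F : {ffun X -> {ffun J -> {ffun I -> bool}}} -> R) :
  (\sum_(T : {ffun E -> bool}) F (slices T)) / #|{ffun E -> bool}|%:R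
  = (\sum_y F y) / #|{ffun X -> {ffun J -> {ffun I -> bool}}}|%:R.
Proof.
apply: (@mean_comp_equal_fibers _ _ slices _ card_slices_fiber R F).
by apply/card_gt0P; exists [ffun=> false]; rewrite inE.
Qed.

End Slices.

Section Chernoff.
Variable R : realType.

Lemma expR_div1D_le (dl : R) : 0 <= dl -> expR (dl / (1 + dl)) <= 1 + dl.
Proof.
move=> dl_ge0.
have := expR_ge1Dx (- (dl / (1 + dl))).
have -> : 1 - dl / (1 + dl) = (1 + dl)^-1 by field; lra.
by rewrite expRN lef_pV2 ?posrE ?expR_gt0 //; lra.
Qed.

Lemma indicator_le_expR (a dl : R) (m : nat) : 0 <= dl ->
  (if a <= m%:R then 1 else 0) <= expR (- a * (dl / (1 + dl))) * (1 + dl) ^+ m.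
Proof.
move=> dl_ge0; set th := dl / (1 + dl).
have th_ge0 : 0 <= th by rewrite divr_ge0 //; lra.
case: ifP => [a_le_m | _]; last by rewrite mulr_ge0 ?expR_ge0 ?exprn_ge0 //; lra.
apply: (@le_trans _ _ (expR (- a * th) * expR th ^+ m)).
  by rewrite -expRM_natl -expRD; apply: le_trans (expR_ge1Dx _); nra.
by rewrite ler_wpM2l ?expR_ge0 // lerXn2r ?nnegrE ?expR_ge0 ?expR_div1D_le //; lra.
Qed.

Lemma binomial_tail_chernoff (X Y : finType) (bad : pred Y) (a dl : R) :
  0 <= dl -> (0 < #|Y|)%N ->
  (\sum_(h : {ffun X -> Y}) if a <= #|[set x | bad (h x)]|%:R then 1 else 0)
    / #|{ffun X -> Y}|%:R
  <= expR (- a * (dl / (1 + dl)))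
     * (1 + dl * (#|[set y | bad y]|%:R / #|Y|%:R)) ^+ #|X|.
Proof.
move=> dl_ge0 Y_gt0.
pose weight (y : Y) : R := if bad y then 1 + dl else 1.
have sum_weight :
    \sum_y weight y = #|Y|%:R * (1 + dl * (#|[set y | bad y]|%:R / #|Y|%:R)).
  rewrite (eq_bigr (fun y => 1 + (if bad y then dl else 0))); last first.
    by move=> y _; rewrite /weight; case: (bad y); rewrite ?addr0.
  rewrite big_split /= -big_mkcond /= !sumr_const cardsE.
  have Y_neq0 : #|Y|%:R != 0 :> R by rewrite pnatr_eq0 -lt0n.
  by rewrite -[dl *+ _]mulr_natr; field.
have prod_weight (h : {ffun X -> Y}) :
    \prod_x weight (h x) = (1 + dl) ^+ #|[set x | bad (h x)]|.
  by rewrite /weight -big_mkcond /= prodr_const cardsE.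
apply: (@le_trans _ _ ((\sum_(h : {ffun X -> Y})
                          expR (- a * (dl / (1 + dl))) * \prod_x weight (h x))
                       / #|{ffun X -> Y}|%:R)).
  rewrite ler_pM2r ?invr_gt0 ?ltr0n ?card_ffun ?expn_gt0 ?Y_gt0 //.
  by apply: ler_sum => h _; rewrite prod_weight indicator_le_expR.
rewrite -mulr_sumr -(bigA_distr_bigA (fun _ : X => weight)) /= prodr_const.
rewrite sum_weight card_ffun natrX exprMn mulrAC -mulrA mulKf //.
by rewrite expf_neq0 // pnatr_eq0 -lt0n.
Qed.

End Chernoff.

Lemma density_avoiding (R : numFieldType) (J I : finType) (w : J -> {ffun I -> bool}) :
  #|[set y : {ffun J -> {ffun I -> bool}} | [forall j, y j != w j]]|%:R
    / #|{ffun J -> {ffun I -> bool}}|%:R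
  = (1 - (2 ^+ #|I|)^-1) ^+ #|J| :> R.
Proof.
pose ind (b : bool) : R := if b then 1 else 0.
have ind_forall (y : {ffun J -> {ffun I -> bool}}) :
    ind [forall j, y j != w j] = \prod_j ind (y j != w j).
  have [/forallP all_ne | /forallPn[j /negPn/eqP eq_j]] := boolP [forall j, y j != w j].
    by rewrite big1 // => j _; rewrite all_ne.
  by rewrite (bigD1 j) //= eq_j eqxx mul0r.
have card_ne (u : {ffun I -> bool}) :
    \sum_(v : {ffun I -> bool}) ind (v != u) = 2 ^+ #|I| - 1.
  rewrite -big_mkcond /= sumr_const cardC1 card_ffun card_bool.
  by rewrite -subn1 natrB ?expn_gt0 // natrX.
rewrite -sum1dep_card natr_sum big_mkcond /=.
rewrite (eq_bigr (fun y : {ffun J -> {ffun I -> bool}} => \prod_j ind (y j != w j)))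
  => [|y _]; last exact: ind_forall.
rewrite -(bigA_distr_bigA (fun j v => ind (v != w j))) /=.
rewrite (eq_bigr (fun=> 2 ^+ #|I| - 1)) => [|j _]; last exact: card_ne.
rewrite prodr_const card_ffun card_ffun card_bool natrX natrX -expr_div_n.
by rewrite mulrBl divff ?mul1r // expf_neq0 ?pnatr_eq0.
Qed.

Lemma chernoff_exponent_le (R : realFieldType) (w q : R) : 1 <= w -> 0 <= q <= 1 ->
  - (w ^+ 3 * q + w ^+ 2) * ((2 * w)^-1 / (1 + (2 * w)^-1)) + w ^+ 3 * ((2 * w)^-1 * q)
  <= - (w / 6).
Proof.
move=> w_ge1 /andP[q_ge0 q_le1].
have -> : - (w ^+ 3 * q + w ^+ 2) * ((2 * w)^-1 / (1 + (2 * w)^-1)) + w ^+ 3 * ((2 * w)^-1 * q)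
   = - (w / 6) + (w ^+ 2 * (3 * q - 4) + w) / (6 * (2 * w + 1)).
  by field; lra.
by rewrite gerDl ler_pdivrMr ?mul0r; [nra | lra].
Qed.

Lemma pow_le_expR_div (R : realType) (c x : R) (n : nat) : 0 < c ->
  c ^+ n.+1 * n.+1`!%:R <= x -> x ^+ n <= expR (x / c).
Proof.
move=> c_gt0 x_ge.
have fact_gt0 : (0 : R) < n.+1`!%:R by rewrite ltr0n fact_gt0.
have x_gt0 : 0 < x by apply: lt_le_trans x_ge; rewrite mulr_gt0 ?exprn_gt0.
apply: le_trans (expR_ge1Dxn n (ltW (divr_gt0 x_gt0 c_gt0))).
have -> : (x / c) ^+ n.+1 / n.+1`!%:R = x ^+ n * (x / (c ^+ n.+1 * n.+1`!%:R)).
  by rewrite expr_div_n exprSr; field; rewrite !lt0r_neq0 ?exprn_gt0.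
apply: ler_wpDl; first lra.
rewrite ler_peMr ?exprn_ge0 ?(ltW x_gt0) // ler_pdivlMr ?mul1r //.
by rewrite mulr_gt0 ?exprn_gt0.
Qed.

Lemma chernoff_tail_le_inv_pow (R : realType) (K : nat) :
  exists N : nat, forall n : nat, (N <= n)%N -> forall q : R, 0 <= q <= 1 ->
  expR (- (n%:R * q + n%:R `^ (2 / 3))
          * ((n%:R `^ (2 / 3) / (2 * n%:R)) / (1 + n%:R `^ (2 / 3) / (2 * n%:R))))
    * (1 + (n%:R `^ (2 / 3) / (2 * n%:R)) * q) ^+ n
  <= 1 / n%:R ^+ K.
Proof.
(* With w = n^(1/3) the exponent is at most -w/6 (chernoff_exponent_le), and
   w^(3K) <= exp(w/6) as soon as w >= c (pow_le_expR_div). *)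
pose c := (6 ^ (3 * K).+1 * (3 * K).+1`!)%N.
have c_gt0 : (0 < c)%N by rewrite muln_gt0 expn_gt0 fact_gt0.
exists (c ^ 3)%N => n n_ge q q_01.
pose w : R := n%:R `^ (1 / 3).
have w_cube : w ^+ 3 = n%:R.
  by rewrite -powR_mulrn ?powR_ge0 // -powRrM mul1r mulVf ?pnatr_eq0 // powRr1.
have w_sq : n%:R `^ (2 / 3) = w ^+ 2.
  by rewrite -powR_mulrn ?powR_ge0 // -powRrM mul1r mulrC.
have c_le_w : c%:R <= w.
  by rewrite -(@ler_pXn2r _ 3) ?nnegrE ?powR_ge0 // w_cube -natrX ler_nat.
have w_ge1 : 1 <= w by apply: le_trans c_le_w; rewrite ler1n.
rewrite w_sq -w_cube (_ : w ^+ 2 / (2 * w ^+ 3) = (2 * w)^-1); last by field; lra.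
have dlq_ge0 : 0 <= (2 * w)^-1 * q by rewrite mulr_ge0 ?invr_ge0 //; lra.
apply: (@le_trans _ _ (expR (- (w ^+ 3 * q + w ^+ 2) * ((2 * w)^-1 / (1 + (2 * w)^-1)))
                       * expR ((2 * w)^-1 * q) ^+ n)).
  by rewrite ler_wpM2l ?expR_ge0 // lerXn2r ?nnegrE ?expR_ge0 ?expR_ge1Dx //; lra.
rewrite -expRM_natl -expRD -w_cube.
apply: (@le_trans _ _ (expR (- (w / 6)))); first by rewrite ler_expR chernoff_exponent_le.
rewrite expRN -exprM div1r lef_pV2 ?posrE ?expR_gt0 ?exprn_gt0 //; last lra.
by apply: pow_le_expR_div; rewrite // -natrX -natrM.
Qed.

Section TournamentSlices.
Variables (k n r d : nat) (t : 'I_k) (p : 'I_d -> 'I_r -> vtx k n).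
Hypothesis p_class : forall j i, nat_of_ord (p j i).1 = nat_of_ord i.
Hypothesis p_disjoint : forall (j j' : 'I_d) (i i' : 'I_r), j != j' -> p j i != p j' i'.
Hypothesis r_le_t : (r <= t)%N.

Lemma p_before_t j i : (nat_of_ord (p j i).1 < nat_of_ord t)%N.
Proof. by rewrite p_class (leq_trans (ltn_ord i)). Qed.

Definition edge_to (x : 'I_n) (j : 'I_d) (i : 'I_r) : edge_dom k n :=
  exist _ (p j i, (t, x)) (p_before_t j i).

Lemma arc_edge_to (T : tourn k n) x j i : Defs.arc T (t, x) (p j i) = ~~ T (edge_to x j i).
Proof.
rewrite /Defs.arc insubF; last by rewrite ltnNge ltnW ?p_before_t.
by rewrite insubT ?p_before_t // => lt_pt; congr (~~ T _); apply: val_inj.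
Qed.

Lemma edge_to_inj x j i x' j' i' :
  edge_to x j i = edge_to x' j' i' -> (x, j, i) = (x', j', i').
Proof.
move/(congr1 val) => /= [eq_p eq_x]; subst x'.
have [eq_j | ne_j] := eqVneq j j'; last by have := p_disjoint i i' ne_j; rewrite eq_p eqxx.
by subst j'; congr (_, _, _); apply/val_inj; rewrite /= -(p_class j i) eq_p p_class.
Qed.

Definition flipped (W : 'I_d -> 'I_r -> bool) (j : 'I_d) : {ffun 'I_r -> bool} :=
  [ffun i => ~~ W j i].

Lemma consistent_slices (T : tourn k n) W x j :
  consistent T (W j) (p j) (t, x) = (slices edge_to T x j == flipped W j).
Proof.
rewrite /consistent; apply/forallP/eqP => [consis | eq_sl].
  by apply/ffunP => i; rewrite !ffunE -(eqP (consis i)) arc_edge_to negbK.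
move=> i; move/ffunP/(_ i): eq_sl; rewrite !ffunE arc_edge_to => ->.
by rewrite negbK.
Qed.

Lemma card_I_set (T : tourn k n) W :
  #|I_set T W p t| = #|[set x | [forall j, slices edge_to T x j != flipped W j]]|.
Proof.
have pair_t_inj : injective (fun x : 'I_n => (t, x)) by move=> x y [].
rewrite -(card_imset _ pair_t_inj); apply: eq_card => -[c x]; rewrite !inE /=.
have [-> | ne_ct] /= := eqVneq c t.
  rewrite mem_imset ?inE //; apply: eq_forallb => j.
  by rewrite consistent_slices.
by apply/esym/imsetP => -[y _ [eq_ct _]]; rewrite eq_ct eqxx in ne_ct.
Qed.

Lemma Pr_I_set_ge (R : realType) W (a : R) :
  Pr R (fun T => a <= #|I_set T W p t|%:R)
  = (\sum_(y : {ffun 'I_n -> {ffun 'I_d -> {ffun 'I_r -> bool}}})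
       if a <= #|[set x | [forall j, y x j != flipped W j]]|%:R then 1 else 0)
    / #|{ffun 'I_n -> {ffun 'I_d -> {ffun 'I_r -> bool}}}|%:R.
Proof.
rewrite /Pr -(mean_comp_slices edge_to_inj) -sum1dep_card natr_sum big_mkcond /=.
by under eq_bigr do rewrite card_I_set.
Qed.

End TournamentSlices.

Theorem lemma4p9 (R : realType) (k d : nat) :
  (2 <= k)%N -> (0 < d)%N ->
  exists N : nat, forall n : nat, (N <= n)%N ->
  forall (r : nat) (t : 'I_k), (1 <= r)%N -> (r < k)%N -> (r <= t)%N ->
  forall (W : 'I_d -> 'I_r -> bool) (p : 'I_d -> 'I_r -> vtx k n),
    (forall (j : 'I_d) (i : 'I_r), nat_of_ord (p j i).1 = nat_of_ord i) ->
    (forall (j j' : 'I_d) (i i' : 'I_r), j != j' -> p j i != p j' i') ->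
    Pr R (fun T : tourn k n =>
            n%:R * (1 - (2 ^+ r)^-1) ^+ d + (n%:R `^ (2 / 3))
              <= (#|I_set T W p t|%:R : R))
      <= 1 / n%:R ^+ (k * d + 1).
Proof.
move=> _ _; have [N tail] := chernoff_tail_le_inv_pow R (k * d + 1).
exists N => n n_ge r t _ _ r_le_t W p p_class p_disjoint.
rewrite (Pr_I_set_ge p_class p_disjoint r_le_t).
have dl_ge0 : 0 <= n%:R `^ (2 / 3) / (2 * n%:R) :> R.
  by rewrite divr_ge0 ?powR_ge0 ?mulr_ge0.
pose avoids_W (y : {ffun 'I_d -> {ffun 'I_r -> bool}}) := [forall j, y j != flipped W j].
apply: le_trans (binomial_tail_chernoff 'I_n avoids_W _ dl_ge0 _) _.
  by rewrite !card_ffun card_bool !expn_gt0.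
rewrite density_avoiding !card_ord; apply: tail => //.
have q_ge0 : 0 <= 1 - (2 ^+ r)^-1 :> R.
  by rewrite subr_ge0 invf_le1 ?exprn_gt0 ?exprn_ege1 ?ler1n.
have q_le1 : 1 - (2 ^+ r)^-1 <= 1 :> R by rewrite gerBl invr_ge0 exprn_ge0.
by rewrite exprn_ge0 ?exprn_ile1.
Qed.
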